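(* In a cylindrical model category, let $s \colon X \to Y$ and $r \colon Y \to X$ be maps and $h \colon \mathrm{Cyl}(X) \to X$ a homotopy from $rs$ to $\mathrm{id}_X$, i.e. $h\circ(\delta_0\otimes X)=rs$ and $h\circ(\delta_1\otimes X)=\mathrm{id}_X$. If $X$ is cofibrant and $Y$ is weakly contractible, then $X$ is weakly contractible.
   Context: An object $Z$ of a model category is weakly contractible if $Z \to 1$ is a weak equivalence. A cylindrical model category is a model category equipped with an adjoint functorial cylinder $\mathrm{Cyl}(X)=\mathbb I\otimes X$ (a left adjoint functor, so preserving the initial object) with natural endpoint inclusions $\delta_k\otimes X\colon X\to \mathrm{Cyl}(X)$ ($k=0,1$) and a natural projection $\mathrm{Cyl}(X)\to X$ retracting both, such that for every cofibration $m$ the Leibniz (pushout) product $\delta_k\hat\otimes m$ with each endpoint inclusion is a trivial cofibration and $(\delta_0\sqcup\delta_1)\hat\otimes m$ is a cofibration. In particular $\delta_k\otimes X\cong\delta_k\hat\otimes(0\to X)$. *)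

Record Cat := {
  Ob :> Type;
  Hom : Ob -> Ob -> Type;
  idm : forall a, Hom a a;
  comp : forall a b c, Hom b c -> Hom a b -> Hom a c;
  comp_id_l : forall a b (f : Hom a b), comp a b b (idm b) f = f;
  comp_id_r : forall a b (f : Hom a b), comp a a b f (idm a) = f;
  comp_assoc : forall a b c d (f : Hom a b) (g : Hom b c) (h : Hom c d),
      comp a c d h (comp a b c g f) = comp a b d (comp b c d h g) f
}.
Arguments Hom {C} a b : rename.
Arguments idm {C} a : rename.
Arguments comp {C a b c} g f : rename.
Notation "g ∘ f" := (comp g f) (at level 40, left associativity).

Section Universal.
Variable C : Cat.

Record Terminal := {
  term_ob : C;
  term_bang : forall a : C, Hom a term_ob;
  term_uniq : forall a (f g : Hom a term_ob), f = g
}.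

Record Initial := {
  init_ob : C;
  init_bang : forall a : C, Hom init_ob a;
  init_uniq : forall a (f g : Hom init_ob a), f = g
}.

Record Coproduct (a b : C) := {
  cp_ob : C;
  cp_in1 : Hom a cp_ob;
  cp_in2 : Hom b cp_ob;
  cp_exists : forall d (u : Hom a d) (v : Hom b d),
      exists w : Hom cp_ob d, w ∘ cp_in1 = u /\ w ∘ cp_in2 = v;
  cp_uniq : forall d (w w' : Hom cp_ob d),
      w ∘ cp_in1 = w' ∘ cp_in1 -> w ∘ cp_in2 = w' ∘ cp_in2 -> w = w'
}.

Record Pushout (a b c : C) (f : Hom a b) (g : Hom a c) := {
  po_ob : C;
  po_inl : Hom b po_ob;
  po_inr : Hom c po_ob;
  po_comm : po_inl ∘ f = po_inr ∘ g;
  po_exists : forall d (u : Hom b d) (v : Hom c d), u ∘ f = v ∘ g ->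
      exists w : Hom po_ob d, w ∘ po_inl = u /\ w ∘ po_inr = v;
  po_uniq : forall d (w w' : Hom po_ob d),
      w ∘ po_inl = w' ∘ po_inl -> w ∘ po_inr = w' ∘ po_inr -> w = w'
}.

Record Pullback (a b c : C) (f : Hom b a) (g : Hom c a) := {
  pb_ob : C;
  pb_pl : Hom pb_ob b;
  pb_pr : Hom pb_ob c;
  pb_comm : f ∘ pb_pl = g ∘ pb_pr;
  pb_exists : forall d (u : Hom d b) (v : Hom d c), f ∘ u = g ∘ v ->
      exists w : Hom d pb_ob, pb_pl ∘ w = u /\ pb_pr ∘ w = v;
  pb_uniq : forall d (w w' : Hom d pb_ob),
      pb_pl ∘ w = pb_pl ∘ w' -> pb_pr ∘ w = pb_pr ∘ w' -> w = w'
}.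

Definition is_retract (a b c d : C) (f : Hom a b) (g : Hom c d) : Prop :=
  exists (i1 : Hom a c) (r1 : Hom c a) (i2 : Hom b d) (r2 : Hom d b),
    r1 ∘ i1 = idm a /\ r2 ∘ i2 = idm b /\
    g ∘ i1 = i2 ∘ f /\ f ∘ r1 = r2 ∘ g.

Definition llp (a b x y : C) (i : Hom a b) (p : Hom x y) : Prop :=
  forall (u : Hom a x) (v : Hom b y), p ∘ u = v ∘ i ->
    exists l : Hom b x, l ∘ i = u /\ p ∘ l = v.

End Universal.

Arguments Pushout C {a b c} f g.
Arguments Pullback C {a b c} f g.
Arguments is_retract {C a b c d} f g.
Arguments llp {C a b x y} i p.
Arguments term_ob {C} _.
Arguments term_bang {C} _ a.
Arguments init_ob {C} _.
Arguments init_bang {C} _ a.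
Arguments cp_ob {C a b} _.
Arguments cp_in1 {C a b} _.
Arguments cp_in2 {C a b} _.
Arguments po_ob {C a b c f g} _.
Arguments po_inl {C a b c f g} _.
Arguments po_inr {C a b c f g} _.

Definition MorClass (C : Cat) := forall a b : C, Hom a b -> Prop.

Record ModelCat (C : Cat) := {
  mc_terminal : Terminal C;
  mc_initial : Initial C;
  mc_coprod : forall a b : C, Coproduct C a b;
  mc_pushout : forall (a b c : C) (f : Hom a b) (g : Hom a c), Pushout C f g;
  mc_pullback : forall (a b c : C) (f : Hom b a) (g : Hom c a), Pullback C f g;
  W : MorClass C;
  Fib : MorClass C;
  Cof : MorClass C;
  W_id : forall a, W a a (idm a);
  Fib_id : forall a, Fib a a (idm a);
  Cof_id : forall a, Cof a a (idm a);
  W_comp : forall a b c (f : Hom a b) (g : Hom b c), W _ _ f -> W _ _ g -> W _ _ (g ∘ f);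
  Fib_comp : forall a b c (f : Hom a b) (g : Hom b c), Fib _ _ f -> Fib _ _ g -> Fib _ _ (g ∘ f);
  Cof_comp : forall a b c (f : Hom a b) (g : Hom b c), Cof _ _ f -> Cof _ _ g -> Cof _ _ (g ∘ f);
  W_2of3_left : forall a b c (f : Hom a b) (g : Hom b c), W _ _ g -> W _ _ (g ∘ f) -> W _ _ f;
  W_2of3_right : forall a b c (f : Hom a b) (g : Hom b c), W _ _ f -> W _ _ (g ∘ f) -> W _ _ g;
  W_retract : forall a b c d (f : Hom a b) (g : Hom c d), is_retract f g -> W _ _ g -> W _ _ f;
  Fib_retract : forall a b c d (f : Hom a b) (g : Hom c d), is_retract f g -> Fib _ _ g -> Fib _ _ f;
  Cof_retract : forall a b c d (f : Hom a b) (g : Hom c d), is_retract f g -> Cof _ _ g -> Cof _ _ f;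
  lift_cof_trivfib : forall a b x y (i : Hom a b) (p : Hom x y),
      Cof _ _ i -> Fib _ _ p -> W _ _ p -> llp i p;
  lift_trivcof_fib : forall a b x y (i : Hom a b) (p : Hom x y),
      Cof _ _ i -> W _ _ i -> Fib _ _ p -> llp i p;
  fact_trivcof_fib : forall a b (f : Hom a b), exists c (i : Hom a c) (p : Hom c b),
      Cof _ _ i /\ W _ _ i /\ Fib _ _ p /\ f = p ∘ i;
  fact_cof_trivfib : forall a b (f : Hom a b), exists c (i : Hom a c) (p : Hom c b),
      Cof _ _ i /\ Fib _ _ p /\ W _ _ p /\ f = p ∘ i
}.

Arguments W {C} _ {a b} f.
Arguments Fib {C} _ {a b} f.
Arguments Cof {C} _ {a b} f.
Arguments mc_terminal {C} _.
Arguments mc_initial {C} _.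
Arguments mc_coprod {C} _ a b.
Arguments mc_pushout {C} _ {a b c} f g.

Definition weakly_contractible {C} (M : ModelCat C) (Z : C) : Prop :=
  W M (term_bang (mc_terminal M) Z).

Definition cofibrant {C} (M : ModelCat C) (Z : C) : Prop :=
  Cof M (init_bang (mc_initial M) Z).

Record Functor (C D : Cat) := {
  fob :> C -> D;
  fmap : forall a b : C, Hom a b -> Hom (fob a) (fob b);
  fmap_id : forall a, fmap a a (idm a) = idm (fob a);
  fmap_comp : forall a b c (f : Hom a b) (g : Hom b c),
      fmap a c (g ∘ f) = fmap b c g ∘ fmap a b f
}.
Arguments fmap {C D} _ {a b} _.

Record Cylindrical {C : Cat} (M : ModelCat C) := {
  Cyl : Functor C C;
  cyl_radj : Functor C C;
  cyl_unit : forall X : C, Hom X (cyl_radj (Cyl X));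
  cyl_counit : forall Y : C, Hom (Cyl (cyl_radj Y)) Y;
  cyl_unit_nat : forall X X' (f : Hom X X'),
      cyl_unit X' ∘ f = fmap cyl_radj (fmap Cyl f) ∘ cyl_unit X;
  cyl_counit_nat : forall Y Y' (g : Hom Y Y'),
      g ∘ cyl_counit Y = cyl_counit Y' ∘ fmap Cyl (fmap cyl_radj g);
  cyl_triangle1 : forall X, cyl_counit (Cyl X) ∘ fmap Cyl (cyl_unit X) = idm (Cyl X);
  cyl_triangle2 : forall Y, fmap cyl_radj (cyl_counit Y) ∘ cyl_unit (cyl_radj Y) = idm (cyl_radj Y);
  delta0 : forall X : C, Hom X (Cyl X);
  delta1 : forall X : C, Hom X (Cyl X);
  cyl_proj : forall X : C, Hom (Cyl X) X;
  delta0_nat : forall X X' (f : Hom X X'), delta0 X' ∘ f = fmap Cyl f ∘ delta0 X;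
  delta1_nat : forall X X' (f : Hom X X'), delta1 X' ∘ f = fmap Cyl f ∘ delta1 X;
  proj_nat : forall X X' (f : Hom X X'), cyl_proj X' ∘ fmap Cyl f = f ∘ cyl_proj X;
  proj_delta0 : forall X, cyl_proj X ∘ delta0 X = idm X;
  proj_delta1 : forall X, cyl_proj X ∘ delta1 X = idm X;
  (* Leibniz product delta_k ^(x) m : Cyl A +_A B -> Cyl B is a trivial
     cofibration for every cofibration m : A -> B *)
  leibniz_delta0 : forall A B (m : Hom A B), Cof M m ->
      forall w : Hom (po_ob (mc_pushout M (delta0 A) m)) (Cyl B),
        w ∘ po_inl _ = fmap Cyl m -> w ∘ po_inr _ = delta0 B ->
        Cof M w /\ W M w;
  leibniz_delta1 : forall A B (m : Hom A B), Cof M m ->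
      forall w : Hom (po_ob (mc_pushout M (delta1 A) m)) (Cyl B),
        w ∘ po_inl _ = fmap Cyl m -> w ∘ po_inr _ = delta1 B ->
        Cof M w /\ W M w;
  (* Leibniz product (delta_0 + delta_1) ^(x) m :
     Cyl A +_(A+A) (B+B) -> Cyl B is a cofibration for every cofibration m *)
  leibniz_delta01 : forall A B (m : Hom A B), Cof M m ->
      forall (mm : Hom (cp_ob (mc_coprod M A A)) (cp_ob (mc_coprod M B B)))
             (dA : Hom (cp_ob (mc_coprod M A A)) (Cyl A))
             (dB : Hom (cp_ob (mc_coprod M B B)) (Cyl B)),
        mm ∘ cp_in1 _ = cp_in1 _ ∘ m -> mm ∘ cp_in2 _ = cp_in2 _ ∘ m ->
        dA ∘ cp_in1 _ = delta0 A -> dA ∘ cp_in2 _ = delta1 A ->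
        dB ∘ cp_in1 _ = delta0 B -> dB ∘ cp_in2 _ = delta1 B ->
        forall w : Hom (po_ob (mc_pushout M dA mm)) (Cyl B),
          w ∘ po_inl _ = fmap Cyl m -> w ∘ po_inr _ = dB ->
          Cof M w
}.
Arguments Cyl {C M} _.
Arguments delta0 {C M} _ X.
Arguments delta1 {C M} _ X.

(* Since X is cofibrant, δ0 ⊗ X is a trivial cofibration: it is the Leibniz
   product δ0 ⊗̂ (0 → X) precomposed with the isomorphism X ≅ Cyl(0) ⊔_0 X,
   Cyl(0) being initial because Cyl is a left adjoint.  Its pushout P along s
   is then a trivial cofibration Y → P, so P is weakly contractible.  The maps
   h and r glue to a map P → X retracting X → Cyl(X) → P (through δ1), so
   X → 1 is a retract of P → 1. *)


Section ModelCategory.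
Variable C : Cat.
Variable M : ModelCat C.

Lemma iso_trivcof (a b : C) (f : Hom a b) (g : Hom b a) :
  g ∘ f = idm a -> f ∘ g = idm b -> Cof M f /\ W M f.
Proof.
  intros gf fg.
  assert (R : is_retract f (idm b)).
  { exists f, g, (idm b), (idm b).
    repeat split; rewrite ?comp_id_l; first [reflexivity | assumption]. }
  split; [apply (Cof_retract C M _ _ _ _ _ _ R), Cof_id
         | apply (W_retract C M _ _ _ _ _ _ R), W_id].
Qed.

(* Factor [po_inr P] as a trivial cofibration [i] followed by a fibration [p];
   lifting [f] against [p] splits [p], exhibiting [po_inr P] as a retract of [i]. *)
Lemma pushout_trivcof (a b c : C) (f : Hom a b) (g : Hom a c) (P : Pushout C f g) :
  Cof M f -> W M f -> Cof M (po_inr P) /\ W M (po_inr P).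
Proof.
  intros Cf Wf.
  destruct (fact_trivcof_fib C M _ _ (po_inr P)) as [z [i [p [Ci [Wi [Fp E]]]]]].
  assert (square : p ∘ (i ∘ g) = po_inl P ∘ f).
  { rewrite comp_assoc, <- E. symmetry. apply po_comm. }
  destruct (lift_trivcof_fib C M _ _ _ _ f p Cf Wf Fp (i ∘ g) (po_inl P) square)
    as [l [lf pl]].
  destruct (po_exists C _ _ _ f g P z l i lf) as [q [q_inl q_inr]].
  assert (pq : p ∘ q = idm _).
  { apply (po_uniq C _ _ _ f g P).
    - rewrite <- comp_assoc, q_inl, pl, comp_id_l. reflexivity.
    - rewrite <- comp_assoc, q_inr, <- E, comp_id_l. reflexivity. }
  assert (R : is_retract (po_inr P) i).
  { exists (idm c), (idm c), q, p.
    repeat split.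
    - apply comp_id_l.
    - exact pq.
    - rewrite comp_id_r. symmetry. exact q_inr.
    - rewrite comp_id_r. exact E. }
  split; [apply (Cof_retract C M _ _ _ _ _ _ R) | apply (W_retract C M _ _ _ _ _ _ R)];
    assumption.
Qed.

Lemma weakly_contractible_weq (Y Z : C) (f : Hom Y Z) :
  W M f -> weakly_contractible M Y -> weakly_contractible M Z.
Proof.
  intros Wf HY.
  apply (W_2of3_right C M _ _ _ f); [exact Wf |].
  rewrite (term_uniq C _ _ (term_bang _ Z ∘ f) (term_bang _ Y)). exact HY.
Qed.

Lemma weakly_contractible_retract (X Z : C) (i : Hom X Z) (q : Hom Z X) :
  q ∘ i = idm X -> weakly_contractible M Z -> weakly_contractible M X.
Proof.
  intros qi HZ.
  apply (W_retract C M _ _ _ _ (term_bang (mc_terminal M) X) (term_bang (mc_terminal M) Z)); [| exact HZ].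
  exists i, q, (idm _), (idm _).
  repeat split; [exact qi | apply comp_id_l | apply term_uniq | apply term_uniq].
Qed.

Lemma pushout_inr_iso (a b c : C) (f : Hom a b) (g : Hom a c) (P : Pushout C f g)
  (b_initial : forall d (x y : Hom b d), x = y) (u : Hom b c) :
  u ∘ f = g -> exists q : Hom (po_ob P) c, q ∘ po_inr P = idm c /\ po_inr P ∘ q = idm _.
Proof.
  intros uf.
  destruct (po_exists C _ _ _ f g P c u (idm c)) as [q [_ q_inr]].
  { rewrite comp_id_l. exact uf. }
  exists q. split; [exact q_inr |].
  apply (po_uniq C _ _ _ f g P).
  - apply b_initial.
  - rewrite <- comp_assoc, q_inr, comp_id_l, comp_id_r. reflexivity.
Qed.

Variable CM : Cylindrical M.

(* A map out of [Cyl I] is determined by its adjoint transpose, a map out of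
   the initial object [I]. *)
Lemma cyl_initial_hom_uniq (Z : C) (f g : Hom (Cyl CM (init_ob (mc_initial M))) Z) :
  f = g.
Proof.
  set (I := init_ob (mc_initial M)).
  assert (transpose : forall f : Hom (Cyl CM I) Z,
    f = cyl_counit M CM Z ∘ fmap (Cyl CM) (fmap (cyl_radj M CM) f ∘ cyl_unit M CM I)).
  { intro f0. rewrite fmap_comp, comp_assoc, <- cyl_counit_nat, <- comp_assoc,
      cyl_triangle1, comp_id_r. reflexivity. }
  rewrite (transpose f), (transpose g).
  f_equal. f_equal. apply init_uniq.
Qed.

Lemma delta0_trivcof (X : C) :
  cofibrant M X -> Cof M (delta0 CM X) /\ W M (delta0 CM X).
Proof.
  intro HX.
  set (I := init_ob (mc_initial M)).
  set (m := init_bang (mc_initial M) X).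
  set (P := mc_pushout M (delta0 CM I) m).
  destruct (po_exists C _ _ _ _ _ P (Cyl CM X) (fmap (Cyl CM) m) (delta0 CM X))
    as [w [w_inl w_inr]].
  { apply init_uniq. }
  destruct (leibniz_delta0 M CM I X m HX w w_inl w_inr) as [Cw Ww].
  destruct (pushout_inr_iso _ _ _ _ _ P cyl_initial_hom_uniq
              (init_bang (mc_initial M) X ∘ cyl_proj M CM I)) as [q [q_inr inr_q]].
  { apply init_uniq. }
  destruct (iso_trivcof _ _ _ _ q_inr inr_q) as [Ci Wi].
  rewrite <- w_inr. split; [apply Cof_comp | apply W_comp]; assumption.
Qed.

End ModelCategory.

Theorem mainTheorem10 (C : Cat) (M : ModelCat C) (CM : Cylindrical M)
  (X Y : C) (s : Hom X Y) (r : Hom Y X) (h : Hom (Cyl CM X) X) :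
  h ∘ delta0 CM X = r ∘ s ->
  h ∘ delta1 CM X = idm X ->
  cofibrant M X ->
  weakly_contractible M Y ->
  weakly_contractible M X.
Proof.
  intros h0 h1 HX HY.
  destruct (delta0_trivcof C M CM X HX) as [Cd Wd].
  set (P := mc_pushout M (delta0 CM X) s).
  destruct (pushout_trivcof C M _ _ _ _ _ P Cd Wd) as [_ W_inr].
  destruct (po_exists C _ _ _ _ _ P X h r h0) as [q [q_inl _]].
  apply (weakly_contractible_retract C M X _ (po_inl P ∘ delta1 CM X) q).
  - rewrite comp_assoc, q_inl. exact h1.
  - exact (weakly_contractible_weq C M _ _ _ W_inr HY).
Qed.
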